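(* For every $h\in\mathbb{C}$ with $|h-1|<1$, there exists a cubic polynomial $p$ with three distinct (simple) roots which is not unicritical, such that $N_{h,p}$ is not convergent, i.e. the Fatou set of $N_{h,p}$ is not equal to the union of the basins of attraction of the roots of $p$.
   Context: For a complex polynomial $p$ and $h\in\mathbb{C}\setminus\{0\}$, the relaxed Newton map is $N_{h,p}(z)=z-h\,\frac{p(z)}{p'(z)}$, a rational map of the Riemann sphere whose finite fixed points are the roots of $p$; a simple root is a fixed point with multiplier $1-h$, attracting when $|h-1|<1$. The basin of an attracting fixed point $z_0$ is $\{z:\lim_{k\to\infty}N_{h,p}^k(z)=z_0\}$. A polynomial is unicritical if it has the form $(z-\alpha)^n+\beta$. A polynomial is generic if all its roots are simple. *)

From HB Require Import structures.
From mathcomp Require Import all_boot all_order all_algebra.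
From mathcomp Require Import complex.
From mathcomp Require Import reals.
Set Implicit Arguments. Unset Strict Implicit. Unset Printing Implicit Defensive.
Import Order.TTheory GRing.Theory Num.Theory.
Local Open Scope ring_scope.

Section Dyn.
Variable R : realType.
Local Notation C := R[i].

(* The Riemann sphere: [Some z] is the finite point z, [None] is infinity. *)
Definition sphere := option C.

Definition modc (z : C) : R := Num.sqrt (complex.Re z ^+ 2 + complex.Im z ^+ 2).

Definition chordal (u v : sphere) : R :=
  match u, v with
  | Some z, Some w =>
      2 * modc (z - w) / (Num.sqrt (1 + modc z ^+ 2) * Num.sqrt (1 + modc w ^+ 2))
  | Some z, None | None, Some z => 2 / Num.sqrt (1 + modc z ^+ 2)
  | None, None => 0
  end.

(* The relaxed Newton map N_{h,p}(z) = z - h p(z)/p'(z), extended to the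
   Riemann sphere: poles (zeros of p' that are not zeros of p) go to
   infinity, and infinity is fixed (valid for deg p >= 2 and h <> deg p). *)
Definition relaxed_newton (h : C) (p : {poly C}) (u : sphere) : sphere :=
  match u with
  | None => None
  | Some z =>
      if (p^`()).[z] == 0 then
        (if p.[z] == 0 then Some z else None)
      else Some (z - h * p.[z] / (p^`()).[z])
  end.

Definition equicontinuous_iterates_at (f : sphere -> sphere) (u : sphere) : Prop :=
  forall eps : R, 0 < eps -> exists2 delta : R, 0 < delta &
    forall (v : sphere) (n : nat), chordal u v < delta ->
      chordal (iter n f u) (iter n f v) < eps.

(* Fatou set: points having a neighbourhood on which the iterates form an
   equicontinuous (equivalently, by Arzela-Ascoli on the compact sphere,
   normal) family *)
Definition fatou_set (f : sphere -> sphere) (u : sphere) : Prop :=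
  exists2 r : R, 0 < r &
    forall v : sphere, chordal u v < r -> equicontinuous_iterates_at f v.

Definition basin (f : sphere -> sphere) (w : sphere) (u : sphere) : Prop :=
  forall eps : R, 0 < eps -> exists K : nat,
    forall k : nat, (K <= k)%N -> chordal (iter k f u) w < eps.

Definition generic_poly (p : {poly C}) : Prop :=
  forall z : C, root p z -> ~~ root p^`() z.

(* unicritical polynomial: (z - alpha)^n + beta, up to a nonzero constant
   factor (which does not change the Newton map) *)
Definition unicritical (p : {poly C}) : Prop :=
  exists (c alpha beta : C) (n : nat),
    c != 0 /\ p = c *: (('X - alpha%:P) ^+ n + beta%:P).

End Dyn.

(* For |h - 1| < 1 the cubic p = h(h-2) z^3 + h(1-h) z^2 + 2h z - 2 is built so
   that its relaxed Newton map N swaps 0 and 1 and has a critical point at 0.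
   Hence N(z) = 1 + O(z^2) is O(rho)-Lipschitz on the disc of radius rho about
   0, which it maps into the disc of radius rho/L about 1, while N is
   L-Lipschitz near 1 and maps that disc back into the first one.  For small
   rho the product of the two constants is at most 1, so all iterates of N are
   1-Lipschitz near 0 and 0 lies in the Fatou set; but the orbit of 0 is
   periodic and avoids the roots, so 0 lies in no basin.  The roots of p are
   simple because a Bezout identity between p and p' ends in a multiple of the
   resultant, which does not vanish for |h - 1| < 1, and p is not unicritical
   because p' is not the square of a linear polynomial. *)

From HB Require Import structures.
From mathcomp Require Import all_boot all_order all_algebra.
From mathcomp Require Import complex.
From mathcomp Require Import reals.
From mathcomp Require Import ring lra.
Set Implicit Arguments. Unset Strict Implicit. Unset Printing Implicit Defensive.
Import Order.TTheory GRing.Theory Num.Theory.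
Local Open Scope complex_scope.
Local Open Scope ring_scope.

Section Modulus.
Variable R : realType.
Local Notation C := R[i].
Implicit Types z w : C.

Lemma modcE z : `|z| = (modc z)%:C.
Proof. by rewrite normc_def. Qed.

Lemma modc_ge0 z : 0 <= modc z.
Proof. exact: sqrtr_ge0. Qed.

Lemma modc_eq0 z : (modc z == 0) = (z == 0).
Proof. by rewrite -(inj_eq (@complexI R)) -modcE normr_eq0. Qed.

Lemma modc_gt0 z : z != 0 -> 0 < modc z.
Proof. by move=> nz; rewrite lt_def modc_eq0 nz modc_ge0. Qed.

Lemma modcM z w : modc (z * w) = modc z * modc w.
Proof. by have := normrM z w; rewrite !modcE -rmorphM => /complexI. Qed.

Lemma modcV z : modc z^-1 = (modc z)^-1.
Proof. by have := normfV z; rewrite !modcE -fmorphV => /complexI. Qed.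

Lemma modcX z n : modc (z ^+ n) = modc z ^+ n.
Proof. by have := normrX n z; rewrite !modcE -rmorphXn => /complexI. Qed.

Lemma modcN z : modc (- z) = modc z.
Proof. by have := normrN z; rewrite !modcE => /complexI. Qed.

Lemma distcC z w : modc (z - w) = modc (w - z).
Proof. by rewrite -modcN opprB. Qed.

Lemma modc_nat n : modc (n%:R : C) = n%:R.
Proof.
by have := normr_nat C n; rewrite modcE -(rmorph_nat (real_complex R)) => /complexI.
Qed.

Lemma ler_modcD z w : modc (z + w) <= modc z + modc w.
Proof. by have := ler_normD z w; rewrite !modcE -rmorphD lecR. Qed.

Lemma lerB_modc z w : modc z - modc w <= modc (z - w).
Proof. by have := lerB_dist z w; rewrite !modcE -rmorphB lecR. Qed.

End Modulus.

Section Chordal.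
Variable R : realType.
Local Notation C := R[i].

Lemma sqrt1Dsqr_ge1 (m : R) : 1 <= Num.sqrt (1 + m ^+ 2).
Proof. by rewrite -{1}sqrtr1 ler_wsqrtr // lerDl sqr_ge0. Qed.

Lemma sqrt1Dsqr_le (m : R) : 0 <= m -> Num.sqrt (1 + m ^+ 2) <= 1 + m.
Proof.
move=> m0; rewrite -[leRHS]ger0_norm -?sqrtr_sqr; last lra.
by apply: ler_wsqrtr; rewrite sqrrD expr1n lerD2r lerDl mul1r mulrn_wge0.
Qed.

Lemma chordal_le (z w : C) : chordal (Some z) (Some w) <= 2 * modc (z - w).
Proof.
rewrite /= ler_pdivrMr ?mulr_gt0 ?(lt_le_trans ltr01) ?sqrt1Dsqr_ge1 //.
rewrite ler_peMr ?mulr_ge0 ?modc_ge0 //.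
by have := sqrt1Dsqr_ge1 (modc z); have := sqrt1Dsqr_ge1 (modc w); nra.
Qed.

Lemma chordal_gt0 (u v : sphere R) : u != v -> 0 < chordal u v.
Proof.
have sq_gt0 (z : C) : 0 < Num.sqrt (1 + modc z ^+ 2).
  exact: lt_le_trans ltr01 (sqrt1Dsqr_ge1 _).
case: u => [z|]; case: v => [w|] //= uv; rewrite ?divr_gt0 ?mulr_gt0 ?sq_gt0 //.
by rewrite modc_gt0 // subr_eq0; apply: contraNneq uv => ->.
Qed.

Lemma chordal_small (v : C) (u : sphere R) : modc v <= 1 ->
  chordal (Some v) u < 1 / 3 ->
  exists2 w, u = Some w & modc (v - w) <= 3 * chordal (Some v) u.
Proof.
move=> v1; have v0 := modc_ge0 v.
have Sv1 := sqrt1Dsqr_ge1 (modc v); have Sv2 := sqrt1Dsqr_le v0.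
case: u => [w|] /=; last by rewrite ltr_pdivrMr; lra.
move=> ch; exists w => //; move: ch.
have w0 := modc_ge0 w; have Sw1 := sqrt1Dsqr_ge1 (modc w).
have Sw2 := sqrt1Dsqr_le w0.
have tri : modc w <= modc v + modc (v - w).
  by have := lerB_modc w v; rewrite distcC; lra.
set Sv := Num.sqrt _ in Sv1 Sv2 *; set Sw := Num.sqrt _ in Sw1 Sw2 *.
set m := modc (v - w) in tri *; have m0 : 0 <= m by exact: modc_ge0.
have P : 0 < Sv * Sw by nra.
rewrite ltr_pdivrMr // mulrA ler_pdivlMr // => ch.
have SS : Sv * Sw <= 2 * (2 + m) by nra.
nra.
Qed.

End Chordal.

Section LocalLipschitz.
Variable R : realType.
Local Notation C := R[i].

Lemma poly_lipschitz (p : {poly C}) (r : R) : 0 <= r -> exists M : R, 0 <= M /\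
  forall z w, modc z <= r -> modc w <= r ->
    modc p.[z] <= M /\ modc (p.[z] - p.[w]) <= M * modc (z - w).
Proof.
move=> r0; elim/poly_ind: p => [|p c [M [M0 HM]]].
  by exists 0; split=> // z w _ _; rewrite !horner0 subr0 mul0r (modc_nat _ 0).
exists (M * r + M + modc c); split; first by have := modc_ge0 c; nra.
move=> z w z_r w_r; rewrite !hornerMXaddC.
have [pz pzw] := HM z w z_r w_r; have [pw _] := HM w z w_r z_r.
have := modc_ge0 c; have := modc_ge0 p.[w]; have := modc_ge0 (z - w).
have := modc_ge0 (p.[z] - p.[w]) => ? ? ? ?.
split.
  apply: le_trans (ler_modcD _ _) _; rewrite modcM.
  have : modc p.[z] * modc z <= M * r by apply: ler_pM; rewrite ?modc_ge0.
  lra.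
have -> : p.[z] * z + c - (p.[w] * w + c) = (p.[z] - p.[w]) * z + p.[w] * (z - w).
  by ring.
apply: le_trans (ler_modcD _ _) _; rewrite !modcM.
have : modc (p.[z] - p.[w]) * modc z <= M * modc (z - w) * r.
  by apply: ler_pM; rewrite ?modc_ge0.
have : modc p.[w] * modc (z - w) <= M * modc (z - w) by apply: ler_pM.
nra.
Qed.

Lemma poly_modc_ge_half (q : {poly C}) (c : C) : q.[c] != 0 ->
  exists2 r : R, 0 < r & forall z, modc (z - c) <= r ->
    [/\ modc z <= modc c + 1 & modc q.[c] / 2 <= modc q.[z]].
Proof.
move=> qc; have k0 := modc_gt0 qc; set k := modc q.[c] in k0 *.
have c0 := modc_ge0 c.
have [M [M0 HM]] := poly_lipschitz q (addr_ge0 c0 ler01).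
have r0 : 0 < k / (2 * (M + 1)) by rewrite divr_gt0 // mulr_gt0 //; lra.
exists (Num.min 1 (k / (2 * (M + 1)))); first by rewrite lt_min r0 ltr01.
move=> z; rewrite le_min => /andP[zc1 zck].
have z_near : modc z <= modc c + 1.
  by have := lerB_modc z c; lra.
split=> //; have [_ qzc] := HM z c z_near ltac:(lra).
have : M * modc (z - c) <= M * (k / (2 * (M + 1))) by apply: ler_wpM2l.
have -> : M * (k / (2 * (M + 1))) = k / 2 - k / (2 * (M + 1)).
  by field; rewrite gt_eqF //; lra.
have := lerB_modc q.[c] q.[z]; rewrite distcC -/k; lra.
Qed.

Lemma modc_div_le (x s : C) (m : R) : 0 < m -> m <= modc s ->
  modc (x / s) <= modc x / m.
Proof.
move=> m0 ms; rewrite modcM modcV ler_wpM2l ?modc_ge0 //.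
by rewrite lef_pV2 ?posrE // (lt_le_trans m0).
Qed.

Lemma modc_divB (x y s t : C) (m : R) : 0 < m -> m <= modc s -> m <= modc t ->
  modc (x / s - y / t) <= (modc (x - y) * modc t + modc y * modc (s - t)) / m ^+ 2.
Proof.
move=> m0 ms mt; have s0 : s != 0 by rewrite -modc_eq0 gt_eqF // (lt_le_trans m0).
have t0 : t != 0 by rewrite -modc_eq0 gt_eqF // (lt_le_trans m0).
have -> : x / s - y / t = ((x - y) * t - y * (s - t)) / (s * t) by field; apply/andP.
apply: le_trans (modc_div_le _ (m := m ^+ 2) _ _) _; first exact: exprn_gt0.
  by rewrite modcM expr2 ler_pM // ltW.
apply: ler_wpM2r; first by rewrite invr_ge0 exprn_ge0 // ltW.
by apply: le_trans (ler_modcD _ _) _; rewrite modcN !modcM.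
Qed.

Lemma ratio_lipschitz (p q : {poly C}) (c : C) : q.[c] != 0 ->
  exists r M : R, [/\ 0 < r, 0 <= M & forall z w,
    modc (z - c) <= r -> modc (w - c) <= r ->
    [/\ q.[z] != 0, modc (p.[z] / q.[z]) <= M &
        modc (p.[z] / q.[z] - p.[w] / q.[w]) <= M * modc (z - w)]].
Proof.
move=> qc; have [r r0 Hq] := poly_modc_ge_half qc.
have m0 : 0 < modc q.[c] / 2 by rewrite divr_gt0 ?modc_gt0.
set m := modc q.[c] / 2 in m0 Hq.
have c1 : 0 <= modc c + 1 by rewrite addr_ge0 ?modc_ge0.
have [Mp [Mp0 Hp]] := poly_lipschitz p c1.
have [Mq [Mq0 HMq]] := poly_lipschitz q c1.
have m2 : 0 < m ^+ 2 by exact: exprn_gt0.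
have M2 : 0 <= 2 * Mp * Mq / m ^+ 2.
  by rewrite divr_ge0 ?(ltW m2) //; apply: mulr_ge0 => //; apply: mulr_ge0.
have im : 0 <= m^-1 by rewrite invr_ge0 (ltW m0).
exists r, (Mp / m + 2 * Mp * Mq / m ^+ 2); split=> //.
  by rewrite addr_ge0 // divr_ge0 // ltW.
move=> z w zc wc; have [z_near qz] := Hq z zc; have [w_near qw] := Hq w wc.
have [pz pzw] := Hp z w z_near w_near; have [pw _] := Hp w z w_near z_near.
have [_ qzw] := HMq z w z_near w_near; have [qw' _] := HMq w z w_near z_near.
split.
- by rewrite -modc_eq0 gt_eqF // (lt_le_trans m0).
- apply: le_trans (modc_div_le _ m0 qz) _.
  have : modc p.[z] / m <= Mp / m by rewrite ler_wpM2r.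
  lra.
- apply: le_trans (modc_divB _ _ m0 qz qw) _.
  have := modc_ge0 (z - w); have := modc_ge0 p.[w]; have := modc_ge0 q.[w].
  move=> ? ? ?.
  have : modc (p.[z] - p.[w]) * modc q.[w] + modc p.[w] * modc (q.[z] - q.[w])
      <= 2 * Mp * Mq * modc (z - w).
    have : modc (p.[z] - p.[w]) * modc q.[w] <= Mp * modc (z - w) * Mq.
      by apply: ler_pM; rewrite ?modc_ge0.
    have : modc p.[w] * modc (q.[z] - q.[w]) <= Mp * (Mq * modc (z - w)).
      by apply: ler_pM; rewrite ?modc_ge0.
    lra.
  move=> num; apply: le_trans (ler_wpM2r _ num) _.
    by rewrite invr_ge0 ltW.
  rewrite mulrAC ler_wpM2r ?modc_ge0 //.
  by rewrite lerDr divr_ge0 // ltW.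
Qed.
End LocalLipschitz.

Section FatouCriterion.
Variable R : realType.
Local Notation C := R[i].
Variables (f : sphere R -> sphere R) (F : C -> C) (rho M : R).
Hypotheses (rho_gt0 : 0 < rho) (M_ge0 : 0 <= M).
Hypothesis iter_f : forall n z, modc z <= rho -> iter n f (Some z) = Some (iter n F z).
Hypothesis iter_F_lipschitz : forall n z w, modc z <= rho -> modc w <= rho ->
  modc (iter n F z - iter n F w) <= M * modc (z - w).

Lemma equicontinuous_iterates_at_lipschitz (v : C) :
  modc v <= 1 -> modc v <= rho / 2 -> equicontinuous_iterates_at f (Some v).
Proof.
move=> v1 v_rho eps eps0; have := M_ge0; have := rho_gt0 => rho0 M0.
set e := eps / (6 * (M + 1)).
have e0 : 0 < e by rewrite divr_gt0 // mulr_gt0 //; lra.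
have eE : e * (6 * (M + 1)) = eps by rewrite mulfVK // gt_eqF //; lra.
exists (Num.min (1 / 3) (Num.min (rho / 6) e)).
  by rewrite !lt_min e0 divr_gt0 //=; lra.
move=> u n; rewrite !lt_min => /and3P[ch3 ch_rho ch_e].
have [w def_u vw] := chordal_small v1 ch3; subst u.
have w_rho : modc w <= rho.
  by have := lerB_modc w v; rewrite distcC; lra.
have v_rho' : modc v <= rho by lra.
rewrite !iter_f //; apply: le_lt_trans (chordal_le _ _) _.
have := iter_F_lipschitz n v_rho' w_rho; have := modc_ge0 (v - w).
set m := modc (v - w) in vw *; set ch := chordal _ _ in ch_e vw.
have : M * m <= M * (3 * e) by apply: ler_wpM2l; lra.
lra.
Qed.

Lemma fatou_set_lipschitz : fatou_set f (Some 0).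
Proof.
have := rho_gt0 => rho0.
exists (Num.min (1 / 3) (rho / 6)); first by rewrite lt_min divr_gt0 //=; lra.
move=> u; rewrite lt_min => /andP[ch3 ch_rho].
have [|v def_u v0] := chordal_small _ ch3; first by rewrite (modc_nat _ 0); lra.
subst u; rewrite sub0r modcN in v0.
apply: equicontinuous_iterates_at_lipschitz; lra.
Qed.

End FatouCriterion.

Lemma periodic_not_basin (R : realType) (f : sphere R -> sphere R) (u w : sphere R)
    (m : nat) :
  (0 < m)%N -> iter m f u = u -> u != w -> ~ basin f w u.
Proof.
move=> m0 per uw /(_ _ (chordal_gt0 uw)) [K /(_ (K * m)%N)].
have -> : iter (K * m) f u = u by elim: K => //= K IHK; rewrite mulSn iterD IHK.
by rewrite leq_pmulr // ltxx => /(_ isT).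
Qed.

Section RelaxedNewton.
Variable R : realType.
Local Notation C := R[i].
Variables (h : C) (p : {poly C}).

Definition newton_step (z : C) : C := z - h * p.[z] / p^`().[z].

Lemma relaxed_newton_Some z : p^`().[z] != 0 ->
  relaxed_newton h p (Some z) = Some (newton_step z).
Proof. by rewrite /relaxed_newton => /negbTE ->. Qed.

Lemma newton_step_lipschitz c : p^`().[c] != 0 ->
  exists r L : R, [/\ 0 < r, 1 <= L & forall z w,
    modc (z - c) <= r -> modc (w - c) <= r ->
    p^`().[z] != 0 /\ modc (newton_step z - newton_step w) <= L * modc (z - w)].
Proof.
move=> p'c; have [r [M [r0 M0 HM]]] := ratio_lipschitz p p'c.
exists r, (1 + modc h * M); split=> //; first by rewrite lerDl mulr_ge0 ?modc_ge0.
move=> z w zc wc; have [p'z _ pw] := HM z w zc wc; split=> //.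
have -> : newton_step z - newton_step w =
    (z - w) - h * (p.[z] / p^`().[z] - p.[w] / p^`().[w]).
  by rewrite /newton_step; ring.
apply: le_trans (ler_modcD _ _) _; rewrite modcN modcM mulrDl mul1r -mulrA.
by rewrite lerD2l ler_wpM2l ?modc_ge0.
Qed.

End RelaxedNewton.

Lemma iter_Some (T : Type) (f : option T -> option T) (F : T -> T) (P : T -> Prop)
    (z : T) :
  (forall u, P u -> f (Some u) = Some (F u)) -> (forall n, P (iter n F z)) ->
  forall n, iter n f (Some z) = Some (iter n F z).
Proof. by move=> fF PF; elim=> [|n IHn] //=; rewrite IHn fF. Qed.

Section PingPong.
Variable R : realType.
Local Notation C := R[i].
Variables (F : C -> C) (U0 U1 : pred C) (a b : R).
Hypotheses (a_ge0 : 0 <= a) (b_ge0 : 0 <= b) (a_le1 : a <= 1) (ab_le1 : a * b <= 1).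
Hypotheses (F_U0 : forall z, U0 z -> U1 (F z)) (F_U1 : forall z, U1 z -> U0 (F z)).
Hypothesis F_lipU0 : forall z w, U0 z -> U0 w -> modc (F z - F w) <= a * modc (z - w).
Hypothesis F_lipU1 : forall z w, U1 z -> U1 w -> modc (F z - F w) <= b * modc (z - w).

Lemma iter_pingpong n z w : U0 z -> U0 w ->
  [/\ U0 (iter n F z), U0 (iter n F w)
    & modc (iter n F z - iter n F w) <= modc (z - w)] \/
  [/\ U1 (iter n F z), U1 (iter n F w)
    & modc (iter n F z - iter n F w) <= a * modc (z - w)].
Proof.
move=> z0 w0; have d0 := modc_ge0 (z - w).
elim: n => [|n [[zn wn dn]|[zn wn dn]]] /=; first by left; split.
- right; split; try exact: F_U0.
  by apply: le_trans (F_lipU0 zn wn) _; apply: ler_wpM2l.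
- left; split; try exact: F_U1.
  apply: le_trans (F_lipU1 zn wn) _; apply: le_trans (ler_wpM2l b_ge0 dn) _.
  by rewrite mulrA [b * a]mulrC ler_piMl // mulr_ge0.
Qed.

Lemma iter_pingpong_mem n z : U0 z -> U0 (iter n F z) \/ U1 (iter n F z).
Proof.
move=> z0; elim: n => [|n [zn|zn]] /=; first by left.
  by right; apply: F_U0.
by left; apply: F_U1.
Qed.

Lemma iter_pingpong_lipschitz n z w : U0 z -> U0 w ->
  modc (iter n F z - iter n F w) <= modc (z - w).
Proof.
move=> z0 w0; case: (iter_pingpong n z0 w0) => -[_ _ //] /le_trans; apply.
by rewrite ler_piMl ?modc_ge0.
Qed.

End PingPong.

Section SuperattractingCycle.
Variable R : realType.
Local Notation C := R[i].
Variables (f : sphere R -> sphere R) (F G : C -> C) (r0 r1 K L : R).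
Hypotheses (r0_gt0 : 0 < r0) (r1_gt0 : 0 < r1) (K_ge0 : 0 <= K) (L_ge1 : 1 <= L).
Hypothesis F1 : F 1 = 0.
Hypothesis F_near0 : forall z, modc z <= r0 -> F z = 1 + z ^+ 2 * G z.
Hypothesis G_lip : forall z w, modc z <= r0 -> modc w <= r0 ->
  modc (G z) <= K /\ modc (G z - G w) <= K * modc (z - w).
Hypothesis F_lip1 : forall z w, modc (z - 1) <= r1 -> modc (w - 1) <= r1 ->
  modc (F z - F w) <= L * modc (z - w).
Hypothesis f_F : forall z, modc z <= r0 \/ modc (z - 1) <= r1 ->
  f (Some z) = Some (F z).

Lemma superattracting_sub1_le z : modc z <= r0 ->
  modc (F z - 1) <= K * modc z ^+ 2.
Proof.
move=> z_r0; rewrite F_near0 // addrC addKr modcM modcX mulrC.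
by have [GK _] := G_lip z_r0 z_r0; rewrite ler_wpM2r ?exprn_ge0 ?modc_ge0.
Qed.

Lemma superattracting_lipschitz0 (rho : R) z w : rho <= r0 -> rho <= 1 ->
  modc z <= rho -> modc w <= rho -> modc (F z - F w) <= 3 * rho * K * modc (z - w).
Proof.
move=> rho_r0 rho1 z_rho w_rho; have := K_ge0 => K0.
have z_r0 : modc z <= r0 by lra.
have w_r0 : modc w <= r0 by lra.
have [Gz Gzw] := G_lip z_r0 w_r0.
have -> : F z - F w = (z + w) * G z * (z - w) + w ^+ 2 * (G z - G w).
  by rewrite !F_near0 //; ring.
apply: le_trans (ler_modcD _ _) _; rewrite !modcM.
have := modc_ge0 (z - w); have := modc_ge0 w; have := modc_ge0 (G z - G w).
have := modc_ge0 (G z) => ? ? ? ?.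
have zw := ler_modcD z w.
have : modc (z + w) * modc (G z) <= (2 * rho) * K.
  by apply: ler_pM; rewrite ?modc_ge0 //; lra.
have : modc w * modc w * modc (G z - G w) <= rho * rho * (K * modc (z - w)).
  by apply: ler_pM; rewrite ?mulr_ge0 ?modc_ge0 //; apply: ler_pM; rewrite ?modc_ge0.
set d := modc (z - w) => B A.
have : modc (z + w) * modc (G z) * d <= 2 * rho * K * d by apply: ler_wpM2r.
have : rho * (K * d) * rho <= rho * (K * d) * 1.
  by apply: ler_wpM2l; rewrite ?mulr_ge0 //; lra.
lra.
Qed.

Lemma fatou_set_superattracting_cycle : fatou_set f (Some 0).
Proof.
have := r0_gt0; have := r1_gt0; have := K_ge0; have := L_ge1 => L1 K0 r1_0 r0_0.
have c0 : 0 < 1 / (3 * K * L + 1) by rewrite divr_gt0 //; nra.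
set rho := Num.min r0 (Num.min r1 (Num.min 1 (1 / (3 * K * L + 1)))).
have rho0 : 0 < rho by rewrite !lt_min r0_0 r1_0 c0 ltr01.
have : [/\ rho <= r0, rho <= r1, rho <= 1 & rho <= 1 / (3 * K * L + 1)].
  by rewrite !ge_min !lexx !orbT.
case=> rho_r0 rho_r1 rho1 rho_c.
have rhoKL : 3 * rho * K * L <= 1.
  by move: rho_c; rewrite ler_pdivlMr; nra.
have rhoL : rho / L <= rho by rewrite ler_pdivrMr; nra.
set U0 := fun z => modc z <= rho; set U1 := fun z => modc (z - 1) <= rho / L.
have FU0 z : U0 z -> U1 (F z).
  rewrite /U0 /U1 => z_rho; apply: le_trans (superattracting_sub1_le _) _; first lra.
  rewrite ler_pdivlMr; last lra.
  have : modc z ^+ 2 <= rho ^+ 2 by rewrite ler_pXn2r ?nnegrE ?modc_ge0 //; lra.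
  nra.
have FU1 z : U1 z -> U0 (F z).
  rewrite /U0 /U1 => z_1; rewrite -[F z]subr0 -F1.
  apply: le_trans (F_lip1 _ _) _; rewrite ?subrr ?(modc_nat _ 0); try lra.
  by move: z_1; rewrite ler_pdivlMr; lra.
have a0 : 0 <= 3 * rho * K by nra.
have a1 : 3 * rho * K <= 1 by nra.
have lip0 z w : U0 z -> U0 w -> modc (F z - F w) <= 3 * rho * K * modc (z - w).
  by apply: superattracting_lipschitz0.
have lip1 z w : U1 z -> U1 w -> modc (F z - F w) <= L * modc (z - w).
  by rewrite /U1 => z1 w1; apply: F_lip1; lra.
apply: (@fatou_set_lipschitz _ f F rho 1) => // [n z z0|n z w z0 w0].
- apply: (@iter_Some _ _ _ (fun u => U0 u \/ U1 u)) => [u [u0|u1]|k].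
  + by apply: f_F; left; rewrite /U0 in u0; lra.
  + by apply: f_F; right; rewrite /U1 in u1; lra.
  + exact: (iter_pingpong_mem FU0 FU1 k (z := z) z0).
- have b0 : 0 <= L by lra.
  rewrite mul1r.
  exact: (iter_pingpong_lipschitz a0 b0 a1 rhoKL FU0 FU1 lip0 lip1).
Qed.

End SuperattractingCycle.

Lemma square_quadratic_disc (F : numFieldType) (A B C k a : F) :
  (forall z, A * z ^+ 2 + B * z + C = k * (z - a) ^+ 2) -> B ^+ 2 = 4 * A * C.
Proof.
move=> E; have Ea := E a; have Ep := E (a + 1); have Em := E (a - 1).
have : 2 * (2 * A * a + B) = 0.
  transitivity (k * (a + 1 - a) ^+ 2 - k * (a - 1 - a) ^+ 2); last by ring.
  by rewrite -Ep -Em; ring.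
move/eqP; rewrite mulf_eq0 pnatr_eq0 /= addrC addr_eq0 => /eqP EB.
move: Ea; rewrite subrr expr0n mulr0 addrC => /eqP; rewrite addr_eq0 => /eqP ->.
by rewrite EB; ring.
Qed.

Lemma unicritical_deriv (R : realType) (p : {poly R[i]}) :
  size p = 4%N -> unicritical p ->
  exists k a : R[i], forall z, p^`().[z] = k * (z - a) ^+ 2.
Proof.
move=> p4 [c [a [b [n [c0 Ep]]]]]; rewrite {}Ep in p4 *; exists (3 * c), a => z.
have n3 : n = 3%N.
  move: p4; rewrite size_scale //; case: n => [|n].
    by rewrite expr0 -polyCD size_polyC; case: (_ != _).
  rewrite size_polyDl ?size_exp_XsubC ?size_polyC; first by case=> ->.
  by case: (_ != _).
rewrite n3 derivZ derivD derivC addr0 deriv_exp derivXsubC mul1r !hornerE /=.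
by ring.
Qed.

Section CyclePoly.
Variable R : realType.
Local Notation C := R[i].
Variable h : C.
Hypothesis h_near1 : modc (h - 1) < 1.

Lemma h_neq0 : h != 0.
Proof.
apply: contraTneq h_near1 => ->; rewrite sub0r modcN (modc_nat _ 1).
by rewrite ltxx.
Qed.

Lemma h_neq2 : h - 2 != 0.
Proof.
apply: contraTneq h_near1 => h2; have -> : h - 1 = (h - 2) + 1 by ring.
by rewrite h2 add0r (modc_nat _ 1) ltxx.
Qed.

Definition cycle_poly : {poly C} :=
  (h * (h - 2)) *: 'X^3 + (h * (1 - h)) *: 'X^2 + (2 * h) *: 'X - 2%:P.

Lemma cycle_polyE z :
  cycle_poly.[z] = h * (h - 2) * z ^+ 3 + h * (1 - h) * z ^+ 2 + 2 * h * z - 2.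
Proof. by rewrite /cycle_poly !hornerE. Qed.

Lemma cycle_poly_derivE z :
  cycle_poly^`().[z] = 3 * (h * (h - 2)) * z ^+ 2 + 2 * (h * (1 - h)) * z + 2 * h.
Proof. by rewrite /cycle_poly !derivE !hornerE /=; ring. Qed.

Lemma size_cycle_poly : size cycle_poly = 4%N.
Proof.
have a0 : h * (h - 2) != 0 by rewrite mulf_neq0 ?h_neq0 ?h_neq2.
rewrite /cycle_poly -!addrA size_polyDl size_scale ?size_polyXn //.
apply: leq_ltn_trans (size_polyD _ _) _.
rewrite gtn_max (leq_ltn_trans (size_scale_leq _ _)) ?size_polyXn //=.
apply: leq_ltn_trans (size_polyD _ _) _.
rewrite gtn_max (leq_ltn_trans (size_scale_leq _ _)) ?size_polyX //=.
by rewrite size_polyN size_polyC; case: (_ != _).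
Qed.

Lemma cycle_resultant_neq0 : h ^+ 3 - 12 * h ^+ 2 + 46 * h - 54 != 0.
Proof.
apply/eqP => g0; set t := h - 1.
have t1 : modc t < 1 := h_near1.
have t0 := modc_ge0 t.
have : (4 * t - 5) * (16 * t ^+ 2 - 124 * t + 245) = - 9.
  by apply/eqP; rewrite -subr_eq0 -[X in _ == X](mulr0 64) -g0 /t; apply/eqP; ring.
move/(congr1 (@modc R)); rewrite modcM modcN (modc_nat _ 9).
have l1 : 1 <= modc (4 * t - 5).
  have := lerB_modc 5 (4 * t); rewrite distcC modcM !(modc_nat _ _); lra.
have l2 : 105 <= modc (16 * t ^+ 2 - 124 * t + 245).
  have := lerB_modc 245 (124 * t - 16 * t ^+ 2).
  have := ler_modcD (124 * t) (- (16 * t ^+ 2)).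
  rewrite modcN !modcM !(modc_nat _ _).
  have -> : 245 - (124 * t - 16 * t ^+ 2) = 16 * t ^+ 2 - 124 * t + 245 by ring.
  have : modc t * modc t <= 1 by nra.
  lra.
have := ler_pM ler01 (ler0n _ 105) l1 l2; lra.
Qed.

(* Bezout cofactors of [cycle_poly] and its derivative, from the extended
   Euclidean algorithm; the right-hand side is a multiple of their resultant. *)
Lemma cycle_poly_bezout z :
  ((312 * h - 504 * h ^+ 2 + 294 * h ^+ 3 - 72 * h ^+ 4 + 6 * h ^+ 5) * z
    + (432 - 776 * h + 592 * h ^+ 2 - 240 * h ^+ 3 + 50 * h ^+ 4 - 4 * h ^+ 5))
    * cycle_poly.[z]
  + ((- 104 * h + 168 * h ^+ 2 - 98 * h ^+ 3 + 24 * h ^+ 4 - 2 * h ^+ 5) * z ^+ 2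
    + (- 144 + 276 * h - 234 * h ^+ 2 + 106 * h ^+ 3 - 24 * h ^+ 4 + 2 * h ^+ 5) * z
    + (24 + 20 * h - 44 * h ^+ 2 + 18 * h ^+ 3 - 2 * h ^+ 4)) * cycle_poly^`().[z]
  = 4 * (h - 2) ^+ 2 * (h ^+ 3 - 12 * h ^+ 2 + 46 * h - 54).
Proof. by rewrite cycle_polyE cycle_poly_derivE; ring. Qed.

Lemma cycle_poly_generic : generic_poly cycle_poly.
Proof.
move=> z /eqP pz; apply/negP => /eqP p'z; have := cycle_poly_bezout z.
rewrite pz p'z !mulr0 addr0 => /esym/eqP; apply/negP.
by rewrite !mulf_neq0 ?expf_neq0 ?h_neq2 ?cycle_resultant_neq0 ?pnatr_eq0.
Qed.

Lemma cycle_poly_not_unicritical : ~ unicritical cycle_poly.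
Proof.
move=> /(unicritical_deriv size_cycle_poly) [k [a Ek]].
have : (2 * (h * (1 - h))) ^+ 2 = 4 * (3 * (h * (h - 2))) * (2 * h).
  by apply: (@square_quadratic_disc _ _ _ _ k a) => z; rewrite -cycle_poly_derivE.
move=> /eqP; rewrite -subr_eq0.
have -> : (2 * (h * (1 - h))) ^+ 2 - 4 * (3 * (h * (h - 2))) * (2 * h)
    = 4 * h ^+ 2 * ((h - 4) ^+ 2 - 3) by ring.
rewrite !mulf_eq0 pnatr_eq0 (negbTE h_neq0) /= subr_eq0 => /eqP h4.
have := congr1 (@modc R) h4; rewrite modcX (modc_nat _ 3).
have := lerB_modc 3 (h - 1); rewrite distcC (modc_nat _ 3).
have -> : h - 1 - 3 = h - 4 by ring.
have := modc_ge0 (h - 4); have := h_near1; nra.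
Qed.

Local Notation N := (relaxed_newton h cycle_poly).

Lemma cycle_poly_deriv0_neq0 : cycle_poly^`().[0] != 0.
Proof.
by rewrite cycle_poly_derivE expr0n !mulr0 !add0r mulf_neq0 ?h_neq0 ?pnatr_eq0.
Qed.

Lemma cycle_poly_deriv1 : cycle_poly^`().[1] = h * (h - 2).
Proof. by rewrite cycle_poly_derivE expr1n; ring. Qed.

Lemma cycle_poly_deriv1_neq0 : cycle_poly^`().[1] != 0.
Proof. by rewrite cycle_poly_deriv1 mulf_neq0 ?h_neq0 ?h_neq2. Qed.

Definition cycle_num : {poly C} := (h * (h - 2)) *: ((3 - h) *: 'X + (h - 4)%:P).

Lemma newton_cycle_near0 z : cycle_poly^`().[z] != 0 ->
  newton_step h cycle_poly z = 1 + z ^+ 2 * (cycle_num.[z] / cycle_poly^`().[z]).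
Proof.
have -> : cycle_num.[z] = h * (h - 2) * ((3 - h) * z + (h - 4)) by rewrite !hornerE.
rewrite /newton_step cycle_polyE cycle_poly_derivE => p'z.
by field.
Qed.

Lemma newton_cycle1 : newton_step h cycle_poly 1 = 0.
Proof.
rewrite /newton_step cycle_poly_deriv1 cycle_polyE expr1n.
by field; rewrite h_neq0 h_neq2.
Qed.

Lemma newton_cycle_orbit0 : iter 2 N (Some 0) = Some 0.
Proof.
have N0 : newton_step h cycle_poly 0 = 1.
  by rewrite newton_cycle_near0 ?cycle_poly_deriv0_neq0 // expr0n mul0r addr0.
change (N (N (Some 0)) = Some 0).
rewrite relaxed_newton_Some ?cycle_poly_deriv0_neq0 // N0.
by rewrite relaxed_newton_Some ?cycle_poly_deriv1_neq0 // newton_cycle1.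
Qed.

Lemma fatou_newton_cycle0 : fatou_set N (Some 0).
Proof.
have [r0 [K [r0_0 K0 HG]]] := ratio_lipschitz cycle_num cycle_poly_deriv0_neq0.
have [r1 [L [r1_0 L1 HN]]] := newton_step_lipschitz h cycle_poly_deriv1_neq0.
set G := fun z => cycle_num.[z] / cycle_poly^`().[z] in HG *.
have {}HG z w : modc z <= r0 -> modc w <= r0 ->
    [/\ cycle_poly^`().[z] != 0, modc (G z) <= K &
         modc (G z - G w) <= K * modc (z - w)].
  by move=> z_r0 w_r0; apply: HG; rewrite subr0.
apply: (@fatou_set_superattracting_cycle _ N (newton_step h cycle_poly) G r0 r1 K L)
  => //.
- exact: newton_cycle1.
- by move=> z z_r0; have [p'z _ _] := HG z z z_r0 z_r0; apply: newton_cycle_near0.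
- by move=> z w z_r0 w_r0; have [_ Gz Gzw] := HG z w z_r0 w_r0.
- by move=> z w z1 w1; have [_ Nzw] := HN z w z1 w1.
- move=> z [z_r0|z1]; apply: relaxed_newton_Some.
    by have [] := HG z z z_r0 z_r0.
  by have [] := HN z z z1 z1.
Qed.

Lemma cycle_poly_root_neq0 z : root cycle_poly z -> z != 0.
Proof.
apply: contraTneq => ->; rewrite /root cycle_polyE !expr0n !mulr0 !add0r.
by rewrite oppr_eq0 pnatr_eq0.
Qed.

End CyclePoly.

Theorem theoremB (R : realType) (h : R[i]) :
  `|h - 1| < 1 ->
  exists p : {poly R[i]},
    size p = 4%N /\ generic_poly p /\ ~ unicritical p /\
    ~ (forall u : sphere R,
         fatou_set (relaxed_newton h p) u <->
         exists2 z0 : R[i], root p z0 & basin (relaxed_newton h p) (Some z0) u).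
Proof.
rewrite modcE -(rmorph1 (real_complex R)) ltcR => h1.
exists (cycle_poly h); split; first exact: size_cycle_poly.
split; first exact: cycle_poly_generic.
split; first exact: cycle_poly_not_unicritical.
move=> /(_ (Some 0)) [/(_ (fatou_newton_cycle0 h1)) [z0 z0_root basin0] _].
apply: (periodic_not_basin _ (newton_cycle_orbit0 h1) _ basin0) => //.
by apply: contra_neq (cycle_poly_root_neq0 z0_root) => -[->].
Qed.
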